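(* Let $k \geq 2$ be an integer and let $G$ be a $k$-connected $(K_2 \cup kK_1)$-free graph. Then $\alpha(G) \leq \frac{|V(G)|}{2}$ if and only if $G$ is $1$-tough. Moreover, if $G$ is $(k+1)$-connected and $(K_2 \cup kK_1)$-free, then $\alpha(G) < \frac{|V(G)|}{2}$ if and only if $t(G) > 1$.
   Context: All graphs are finite, undirected and simple. $\alpha(G)$ denotes the independence number and $\omega(H)$ the number of components of a graph $H$. For graphs $R, R'$, $R \cup R'$ is their disjoint union and $kR$ is the disjoint union of $k$ copies of $R$; $K_n$ is the complete graph on $n$ vertices. A graph $G$ is $R$-free if it contains no induced subgraph isomorphic to $R$. The toughness $t(G)$ is $\min\{|S|/\omega(G-S) : S \subset V(G),\ \omega(G-S) \geq 2\}$, or $t(G)=\infty$ if $G$ is complete; $G$ is $1$-tough if $t(G) \geq 1$. *)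

(* Simple graphs: symmetric irreflexive relation e on a finType T. *)
From mathcomp Require Import all_boot all_order all_algebra.
Set Implicit Arguments. Unset Strict Implicit. Unset Printing Implicit Defensive.
Import Order.TTheory GRing.Theory Num.Theory.

Section Graphs.
Variables (T : finType) (e : rel T).

Definition independent (A : {set T}) : bool :=
  [forall x in A, forall y in A, ~~ e x y].
Definition alpha : nat := \max_(A : {set T} | independent A) #|A|.

Definition del_rel (S : {set T}) : rel T :=
  [rel x y | [&& x \notin S, y \notin S & e x y]].

Definition components (S : {set T}) : {set {set T}} :=
  [set [set y | connect (del_rel S) x y] | x in ~: S].

Definition ncomp (S : {set T}) : nat := #|components S|.

Definition k_connected (k : nat) : Prop :=
  k < #|T| /\ forall S : {set T}, #|S| < k -> ncomp S = 1.

Definition induced_free (R : finType) (r : rel R) : Prop :=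
  ~ exists f : R -> T, injective f /\ forall x y, e (f x) (f y) = r x y.

(* toughness; None encodes +infinity (no S with omega(G - S) >= 2,
   i.e. G complete) *)
Definition omin (a b : option rat) : option rat :=
  match a, b with
  | None, _ => b
  | _, None => a
  | Some x, Some y => Some (Num.min x y)
  end.

Definition toughness : option rat :=
  \big[omin/None]_(S : {set T} | 2 <= ncomp S)
     Some ((#|S|%:R : rat) / (ncomp S)%:R)%R.

Definition one_tough : Prop :=
  match toughness with None => True | Some t => (1 <= t)%R end.
Definition tough_gt1 : Prop :=
  match toughness with None => True | Some t => (1 < t)%R end.

End Graphs.

Definition K2_kK1_rel (k : nat) : rel ('I_2 + 'I_k)%type :=
  fun x y => match x, y with inl a, inl b => a != b | _, _ => false end.
Arguments K2_kK1_rel k : clear implicits.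

(* If G - S has more than k components, then G - S has no edge: an edge inside one
   component, together with one vertex from each of k further components, would
   induce K_2 \cup kK_1.  Hence V(G) \ S is independent, so |V(G)| - |S| <= alpha(G).
   For a k-connected G every separating S has |S| >= k, so a set S with
   omega(G - S) > |S| (resp. >= |S| in the (k+1)-connected case) would satisfy
   |V(G)| - |S| <= alpha(G) <= |V(G)|/2 and omega(G - S) <= |V(G)| - |S|, which is
   impossible.  Conversely, deleting the complement of a maximum independent set I
   leaves |I| singleton components, and toughness bounds |I| by |V(G)| - |I|. *)

From mathcomp Require Import all_boot all_order all_algebra.
From mathcomp Require Import zify.
Import Order.TTheory GRing.Theory Num.Theory.
Set Implicit Arguments. Unset Strict Implicit.

Section Components.
Variables (T : finType) (e : rel T).
Hypotheses (esym : symmetric e) (eirr : irreflexive e).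

Definition apart (u v : T) : bool := (u != v) && ~~ e u v.

Lemma del_rel_sym (S : {set T}) : symmetric (del_rel e S).
Proof. by move=> x y; rewrite /del_rel /= esym andbCA. Qed.

Lemma componentsE (S C : {set T}) (u : T) : C \in components e S -> u \in C ->
  C = [set y | connect (del_rel e S) u y].
Proof.
move=> /imsetP[x _ ->]; rewrite inE => xu.
by apply/setP=> y; rewrite !inE (same_connect (sym_connect_sym (del_rel_sym S)) xu).
Qed.

Lemma components_notin (S C : {set T}) (u : T) : C \in components e S -> u \in C ->
  u \notin S.
Proof.
move=> /imsetP[x xS ->]; rewrite inE (sym_connect_sym (del_rel_sym S)).
case/connectP=> [[|z p] /=]; first by move=> _ <-; rewrite -in_setC.
by case/andP=> /and3P[].
Qed.

Lemma components_apart (S C1 C2 : {set T}) (u v : T) :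
  C1 \in components e S -> C2 \in components e S -> C1 != C2 ->
  u \in C1 -> v \in C2 -> apart u v.
Proof.
move=> C1S C2S + uC1 vC2; apply: contraNT; rewrite negb_and !negbK => uv.
have vS := components_notin C2S vC2.
have conn_uv : connect (del_rel e S) u v.
  case/orP: uv => [/eqP <- | euv]; first exact: connect0.
  by apply: connect1; rewrite /del_rel /= (components_notin C1S uC1) vS.
rewrite (componentsE C1S uC1) (componentsE C2S vC2); apply/eqP/setP=> y.
by rewrite !inE (same_connect (sym_connect_sym (del_rel_sym S)) conn_uv).
Qed.

Lemma components_transversal k (S C0 : {set T}) :
  C0 \in components e S -> k < ncomp e S ->
  exists r : 'I_k -> T, (forall i u, u \in C0 -> apart u (r i)) /\
                        (forall i j, i != j -> apart (r i) (r j)).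
Proof.
move=> C0S; rewrite /ncomp (cardsD1 C0) C0S add1n ltnS => kD.
pose comp (i : 'I_k) : {set T} := enum_val (widen_ord kD i).
have compP i : comp i \in components e S :\ C0 := enum_valP _.
have comp_inj : injective comp.
  by move=> i j /enum_val_inj/(congr1 val) ij; apply: val_inj.
have [r rP] : exists r : 'I_k -> T, forall i, r i \in comp i.
  apply: (@fin_all_exists _ (fun=> T) (fun i x => x \in comp i)) => i.
  by have /setD1P[_ /imsetP[x _ ->]] := compP i; exists x; rewrite inE connect0.
have [compNC0 compS] : (forall i, comp i != C0) /\ (forall i, comp i \in components e S).
  by split=> i; have /setD1P[] := compP i.
exists r; split=> [i u uC0 | i j ij].
  by apply: components_apart C0S (compS i) _ uC0 (rP i); rewrite eq_sym.
by apply: components_apart (compS i) (compS j) _ (rP i) (rP j); rewrite (inj_eq comp_inj).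
Qed.

Lemma K2_kK1_induced k (x y : T) (r : 'I_k -> T) :
  e x y -> (forall i, apart x (r i)) -> (forall i, apart y (r i)) ->
  (forall i j, i != j -> apart (r i) (r j)) -> ~ induced_free e (K2_kK1_rel k).
Proof.
move=> exy xr yr rr; apply.
have xy : x != y by apply: contraTneq exy => ->; rewrite eirr.
pose f (a : 'I_2 + 'I_k) := if a is inr i then r i else if a == inl ord0 then x else y.
exists f; split.
  case=> [[[|[|//]] ?]|i] [[[|[|//]] ?]|j]; rewrite /f /= => fab;
    try by congr inl; apply: val_inj.
  - by move: xy; rewrite fab eqxx.
  - by move: (xr j); rewrite /apart fab eqxx.
  - by move: xy; rewrite fab eqxx.
  - by move: (yr j); rewrite /apart fab eqxx.
  - by move: (xr i); rewrite /apart fab eqxx.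
  - by move: (yr i); rewrite /apart fab eqxx.
  - by case: (eqVneq i j) => [-> // | /rr]; rewrite /apart fab eqxx.
have apart_nonedge u v : apart u v -> e u v = false /\ e v u = false.
  by case/andP=> _ /negbTE euv; rewrite [e v u]esym euv.
case=> [[[|[|//]] ?]|i] [[[|[|//]] ?]|j]; rewrite /f /= ?eirr //.
- by case: (apart_nonedge _ _ (xr j)).
- by rewrite esym.
- by case: (apart_nonedge _ _ (yr j)).
- by case: (apart_nonedge _ _ (xr i)).
- by case: (apart_nonedge _ _ (yr i)).
- by case: (eqVneq i j) => [-> | /rr /apart_nonedge[]]; rewrite ?eirr.
Qed.

Lemma independent_compl_of_many_components k (S : {set T}) :
  induced_free e (K2_kK1_rel k) -> k < ncomp e S -> independent e (~: S).
Proof.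
move=> free kS; apply/forallP=> x; apply/implyP; rewrite inE => xS.
apply/forallP=> y; apply/implyP; rewrite inE => yS; apply/negP=> exy.
pose Cx := [set z | connect (del_rel e S) x z].
have CxS : Cx \in components e S by apply/imsetP; exists x; rewrite ?inE.
have [xCx yCx] : x \in Cx /\ y \in Cx.
  by rewrite !inE connect0; split=> //; apply: connect1; rewrite /del_rel /= xS yS.
have [r [Cx_r rr]] := components_transversal CxS kS.
exact: (K2_kK1_induced exy (fun i => Cx_r i x xCx) (fun i => Cx_r i y yCx) rr free).
Qed.

Lemma independentP (I : {set T}) : independent e I -> {in I &, forall x y, ~~ e x y}.
Proof. by move=> /forallP indI x y xI yI; have /forall_inP := implyP (indI x) xI; apply. Qed.

Lemma ncomp_compl_independent (I : {set T}) : independent e I -> ncomp e (~: I) = #|I|.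
Proof.
move=> indI; rewrite /ncomp /components setCK -[RHS](card_imset _ set1_inj).
rewrite (@eq_in_imset _ _ _ set1) // => x xI; apply/setP=> y; rewrite !inE.
apply/idP/eqP=> [|<-]; last exact: connect0.
case/connectP=> [[_ -> //|z p] /= /andP[/and3P[_ + exz] _] _].
by rewrite inE negbK => zI; have := independentP indI xI zI; rewrite exz.
Qed.

Lemma ncomp_le_card_compl (S : {set T}) : ncomp e S <= #|~: S|.
Proof. exact: leq_imset_card. Qed.

Lemma card_independent_le_alpha (I : {set T}) : independent e I -> #|I| <= alpha e.
Proof. by move=> indI; apply: leq_bigmax_cond. Qed.

Lemma alpha_witness : exists2 I : {set T}, independent e I & #|I| = alpha e.
Proof.
have indT : 0 < #|independent e|.
  by apply/card_gt0P; exists set0; rewrite unfold_in; apply/forallP=> x; rewrite inE.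
by have [I indI maxI] := eq_bigmax_cond (fun A : {set T} => #|A|) indT; exists I.
Qed.

Lemma k_connected_separator k (S : {set T}) :
  k_connected e k -> 1 < ncomp e S -> k <= #|S|.
Proof. by case=> _ conn S2; rewrite leqNgt; apply: contraTN S2 => /conn ->. Qed.

Lemma ncomp_le_of_alpha_le_half k (S : {set T}) :
  k_connected e k -> induced_free e (K2_kK1_rel k) -> alpha e * 2 <= #|T| ->
  1 < ncomp e S -> ncomp e S <= #|S|.
Proof.
move=> conn free half S2; rewrite leqNgt; apply/negP=> many.
have kS := k_connected_separator conn S2.
have indS := independent_compl_of_many_components free (leq_ltn_trans kS many).
have := card_independent_le_alpha indS.
by have := ncomp_le_card_compl S; have := cardsC S; lia.
Qed.

Lemma ncomp_lt_of_alpha_lt_half k (S : {set T}) :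
  k_connected e k.+1 -> induced_free e (K2_kK1_rel k) -> alpha e * 2 < #|T| ->
  1 < ncomp e S -> ncomp e S < #|S|.
Proof.
move=> conn free half S2; rewrite ltnNge; apply/negP=> many.
have kS := k_connected_separator conn S2.
have indS := independent_compl_of_many_components free (leq_trans kS many).
have := card_independent_le_alpha indS.
by have := ncomp_le_card_compl S; have := cardsC S; lia.
Qed.

Lemma alpha_le_half_of_ncomp_le : 1 < #|T| ->
  (forall S : {set T}, 1 < ncomp e S -> ncomp e S <= #|S|) -> alpha e * 2 <= #|T|.
Proof.
move=> T2 tough; have [I indI <-] := alpha_witness; have := cardsC I.
case: (leqP 2 #|I|) => [I2 | ]; last lia.
by have := tough (~: I); rewrite ncomp_compl_independent // => /(_ I2); lia.
Qed.

Lemma alpha_lt_half_of_ncomp_lt : 2 < #|T| ->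
  (forall S : {set T}, 1 < ncomp e S -> ncomp e S < #|S|) -> alpha e * 2 < #|T|.
Proof.
move=> T3 tough; have [I indI <-] := alpha_witness; have := cardsC I.
case: (leqP 2 #|I|) => [I2 | ]; last lia.
by have := tough (~: I); rewrite ncomp_compl_independent // => /(_ I2); lia.
Qed.

End Components.

Open Scope ring_scope.

Lemma big_omin_all (P : pred rat) (I : Type) (r : seq I) (p : pred I) (F : I -> rat) :
  {morph P : x y / Num.min x y >-> x && y} ->
  (if \big[omin/None]_(i <- r | p i) Some (F i) is Some t then P t else true)
  = all (fun i => p i ==> P (F i)) r.
Proof.
move=> Pmin; elim: r => [|i r IHr]; first by rewrite big_nil.
rewrite big_cons /=; case: (p i) => //=.
by case: (\big[omin/None]_(j <- r | p j) Some (F j)) IHr => [t|] /= <-; rewrite ?Pmin ?andbT.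
Qed.

Lemma toughness_bound (T : finType) (e : rel T) (P : pred rat) :
  {morph P : x y / Num.min x y >-> x && y} ->
  (if toughness e is Some t then P t else True) <->
  (forall S : {set T}, (1 < ncomp e S)%N -> P (#|S|%:R / (ncomp e S)%:R)).
Proof.
move=> Pmin; rewrite /toughness.
apply: (iff_trans (B := all (fun S : {set T} => (1 < ncomp e S)%N ==>
                              P (#|S|%:R / (ncomp e S)%:R)) (index_enum _))).
  by rewrite -big_omin_all //; case: (\big[omin/None]_(S | _) _).
split=> [/allP PS S | PS]; first exact/implyP/PS/mem_index_enum.
by apply/allP=> S _; apply/implyP/PS.
Qed.

Lemma natr_div_ge1 (R : numFieldType) (a c : nat) :
  (0 < c)%N -> (1 <= a%:R / c%:R :> R) = (c <= a)%N.
Proof. by move=> c0; rewrite ler_pdivlMr ?ltr0n // mul1r ler_nat. Qed.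

Lemma natr_div_gt1 (R : numFieldType) (a c : nat) :
  (0 < c)%N -> (1 < a%:R / c%:R :> R) = (c < a)%N.
Proof. by move=> c0; rewrite ltr_pdivlMr ?ltr0n // mul1r ltr_nat. Qed.

Lemma one_tough_iff (T : finType) (e : rel T) :
  one_tough e <-> forall S : {set T}, (1 < ncomp e S)%N -> (ncomp e S <= #|S|)%N.
Proof.
apply: iff_trans (toughness_bound e (P := fun t => 1 <= t) _) _.
  by move=> x y; rewrite le_min.
by split=> tough S S2; have := tough S S2; rewrite natr_div_ge1 // ltnW.
Qed.

Lemma tough_gt1_iff (T : finType) (e : rel T) :
  tough_gt1 e <-> forall S : {set T}, (1 < ncomp e S)%N -> (ncomp e S < #|S|)%N.
Proof.
apply: iff_trans (toughness_bound e (P := fun t => 1 < t) _) _.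
  by move=> x y; rewrite lt_min.
by split=> tough S S2; have := tough S S2; rewrite natr_div_gt1 // ltnW.
Qed.

Lemma natr_le_half (R : numFieldType) (a n : nat) :
  (a%:R <= n%:R / 2%:R :> R) = (a * 2 <= n)%N.
Proof. by rewrite ler_pdivlMr ?ltr0n // -natrM ler_nat. Qed.

Lemma natr_lt_half (R : numFieldType) (a n : nat) :
  (a%:R < n%:R / 2%:R :> R) = (a * 2 < n)%N.
Proof. by rewrite ltr_pdivlMr ?ltr0n // -natrM ltr_nat. Qed.

Close Scope ring_scope.

Theorem mainTheorem4 (T : finType) (e : rel T)
  (esym : symmetric e) (eirr : irreflexive e) (k : nat) (hk : 2 <= k) :
  (k_connected e k -> induced_free e (K2_kK1_rel k) ->
     ((alpha e)%:R <= (#|T|%:R : rat) / 2%:R)%R <-> one_tough e)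
  /\
  (k_connected e k.+1 -> induced_free e (K2_kK1_rel k) ->
     ((alpha e)%:R < (#|T|%:R : rat) / 2%:R)%R <-> tough_gt1 e).
Proof.
split=> conn free.
- rewrite natr_le_half one_tough_iff; split=> [half S | tough].
    exact: ncomp_le_of_alpha_le_half conn free half.
  by apply: alpha_le_half_of_ncomp_le tough; case: conn; lia.
- rewrite natr_lt_half tough_gt1_iff; split=> [half S | tough].
    exact: ncomp_lt_of_alpha_lt_half conn free half.
  by apply: alpha_lt_half_of_ncomp_lt tough; case: conn; lia.
Qed.
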